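(* Let $(\mathfrak{g},[\cdot,\cdot]_{\mathfrak{g}},\phi_{\mathfrak{g}})$ be a finite-dimensional Hom-Lie algebra with a nondegenerate symmetric invariant bilinear form $\mathfrak B$. Then $\mathfrak g$ is weakly involutive, and $(\mathfrak g,\phi_{\mathfrak g},\mathrm{ad})$ and $(\mathfrak g^*,\phi_{\mathfrak g}^*,\mathrm{ad}^\circ)$ are equivalent representations of $\mathfrak g$. Conversely, if $\mathfrak g$ is weakly involutive and $(\mathfrak g,\phi_{\mathfrak g},\mathrm{ad})$ and $(\mathfrak g^*,\phi_{\mathfrak g}^*,\mathrm{ad}^\circ)$ are equivalent representations of $\mathfrak g$, then there exists a nondegenerate invariant bilinear form on $\mathfrak g$.
   Context: A Hom-Lie algebra $(\mathfrak{g},[\cdot,\cdot]_{\mathfrak{g}},\phi_{\mathfrak{g}})$: skew-symmetric bilinear bracket and linear map with $\phi_{\mathfrak g}[x,y]=[\phi_{\mathfrak g}x,\phi_{\mathfrak g}y]$ and $[\phi_{\mathfrak g}(x),[y,z]]+[\phi_{\mathfrak g}(y),[z,x]]+[\phi_{\mathfrak g}(z),[x,y]]=0$; weakly involutive if $[\phi_{\mathfrak g}^2(x),y]_{\mathfrak g}=[x,y]_{\mathfrak g}$ for all $x,y$. A representation $(V,\beta,\rho)$: $\beta\in\mathfrak{gl}(V)$, $\rho:\mathfrak g\to\mathfrak{gl}(V)$ with $\rho(\phi_{\mathfrak g}(x))\beta=\beta\rho(x)$ and $\rho([x,y])\beta=\rho(\phi_{\mathfrak g}(x))\rho(y)-\rho(\phi_{\mathfrak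 g}(y))\rho(x)$. Adjoint: $\mathrm{ad}_xy=[x,y]_{\mathfrak g}$. $\mathrm{ad}^\circ_xa\in\mathfrak g^*$: $\langle\mathrm{ad}^\circ_xa,y\rangle=-\langle a,[\phi_{\mathfrak g}(x),y]_{\mathfrak g}\rangle$. Two representations $(V,\beta,\rho)$, $(V',\beta',\rho')$ are equivalent if there is a linear isomorphism $\varphi:V\to V'$ with $\varphi\rho(x)=\rho'(x)\varphi$ for all $x$ and $\beta'\varphi=\varphi\beta$. A bilinear form $\mathfrak B$ on $\mathfrak g$ is invariant if $\mathfrak B([x,y]_{\mathfrak g},z)=\mathfrak B(x,[\phi_{\mathfrak g}(y),z]_{\mathfrak g})$ and $\mathfrak B(\phi_{\mathfrak g}(x),y)=\mathfrak B(x,\phi_{\mathfrak g}(y))$ for all $x,y,z$. *)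

From HB Require Import structures.
From mathcomp Require Import all_boot all_order all_algebra.
Set Implicit Arguments. Unset Strict Implicit. Unset Printing Implicit Defensive.
Import GRing.Theory.
Local Open Scope ring_scope.

Section HomLie.
Variable K : fieldType.

Definition is_lin (U W : lmodType K) (f : U -> W) : Prop :=
  forall (a : K) (x y : U), f (a *: x + y) = a *: f x + f y.

Variable g : vectType K.

Definition hom_lie (br : g -> g -> g) (phi : g -> g) : Prop :=
  [/\ (forall x, is_lin (br x)) /\ (forall y, is_lin (fun x => br x y)),
      forall x y, br x y = - br y x,
      is_lin phi,
      forall x y, phi (br x y) = br (phi x) (phi y)
    & forall x y z,
      br (phi x) (br y z) + br (phi y) (br z x) + br (phi z) (br x y) = 0].

Definition weakly_involutive (br : g -> g -> g) (phi : g -> g) : Prop :=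
  forall x y, br (phi (phi x)) y = br x y.

Definition is_rep (br : g -> g -> g) (phi : g -> g)
    (W : vectType K) (beta : W -> W) (rho : g -> W -> W) : Prop :=
  [/\ is_lin beta,
      forall x, is_lin (rho x),
      forall a x y w, rho (a *: x + y) w = a *: rho x w + rho y w,
      forall x w, rho (phi x) (beta w) = beta (rho x w)
    & forall x y w,
      rho (br x y) (beta w) = rho (phi x) (rho y w) - rho (phi y) (rho x w)].

Definition rep_equiv (W W' : vectType K) (beta : W -> W) (rho : g -> W -> W)
    (beta' : W' -> W') (rho' : g -> W' -> W') : Prop :=
  exists f : W -> W',
    [/\ is_lin f, bijective f,
        forall x w, f (rho x w) = rho' x (f w)
      & forall w, beta' (f w) = f (beta w)].

Definition dual := 'Hom(g, K^o).

Definition ad (br : g -> g -> g) : g -> g -> g := fun x y => br x y.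

Definition dual_map (phi : g -> g) : dual -> dual :=
  fun a => linfun (fun y : g => (a (phi y) : K^o)).

Definition ad_circ (br : g -> g -> g) (phi : g -> g) : g -> dual -> dual :=
  fun x a => linfun (fun y : g => (- a (br (phi x) y) : K^o)).

Definition invariant_form_hl (br : g -> g -> g) (phi : g -> g) (B : g -> g -> K) :=
  (forall x y z, B (br x y) z = B x (br (phi y) z)) /\
  (forall x y, B (phi x) y = B x (phi y)).

Definition bilin_form_hl (B : g -> g -> K) : Prop :=
  (forall x, is_lin (B x : g -> K^o)) /\ (forall y, is_lin ((fun x => B x y) : g -> K^o)).

Definition symm_form_hl (B : g -> g -> K) : Prop := forall x y, B x y = B y x.

Definition nondegen_hl (B : g -> g -> K) : Prop :=
  (forall x, (forall y, B x y = 0) -> x = 0) /\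
  (forall y, (forall x, B x y = 0) -> y = 0).

End HomLie.

From HB Require Import structures.
From mathcomp Require Import all_boot all_order all_algebra.
Set Implicit Arguments. Unset Strict Implicit. Unset Printing Implicit Defensive.
Import GRing.Theory.
Local Open Scope ring_scope.

(* A nondegenerate form B identifies g with g^* through x |-> B(x, _); the two
   invariance identities say precisely that this map intertwines ad with ad°
   and phi with phi^*, and it is bijective since dim g^* = dim g. Weak
   involutivity also comes from invariance and symmetry:
   B(z, [phi^2 x, phi y]) and B(z, [x, phi y]) both equal B([y, z], x), so
   [phi^2 x, phi y] = [x, phi y], whence
   B([phi^2 x, y], z) = B(x, [phi^3 y, phi^2 z]) = B(x, [phi y, z]).
   Conversely an equivalence f : g -> g^* yields the invariant form
   B(x, y) = f(y)(x), nondegenerate because f is bijective and g^* separates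
   the points of g. *)

Section IsLin.
Variables (K : fieldType) (U W : lmodType K) (f : U -> W).

(* Carrying the linearity proof in the alias lets the linear structure of [f]
   be found canonically, so the generic [linear*] lemmas apply. *)
Definition lin_fun of is_lin f : U -> W := f.

Variable f_lin : is_lin f.
HB.instance Definition _ :=
  GRing.isLinear.Build K U W *:%R (lin_fun f_lin) f_lin.

Lemma is_lin0 : f 0 = 0.
Proof. exact: (linear0 (lin_fun f_lin)). Qed.

Lemma is_linN x : f (- x) = - f x.
Proof. exact: (linearN (lin_fun f_lin)). Qed.

Lemma is_linB x y : f (x - y) = f x - f y.
Proof. exact: (linearB (lin_fun f_lin)). Qed.
End IsLin.

Lemma linfun_is_linE (K : fieldType) (U W : vectType K) (f : U -> W) :
  is_lin f -> linfun f =1 f.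
Proof. move=> f_lin; exact: (lfunE (lin_fun f_lin)). Qed.

Section LinearAlgebra.
Variable K : fieldType.

Lemma dual_separates (V : vectType K) (v : V) :
  (forall a : 'Hom(V, K^o), a v = 0) -> v = 0.
Proof.
move=> av0; rewrite (coord_vbasis (memvf v)) big1 // => i _.
have := av0 (linfun (coord (vbasis fullv) i : V -> K^o)).
by rewrite lfunE => ->; rewrite scale0r.
Qed.

Lemma dim_dual (V : vectType K) : \dim {: 'Hom(V, K^o)} = \dim {: V}.
Proof. by rewrite !dimvf; exact: muln1. Qed.

Lemma lker0_bij (U W : vectType K) (f : 'Hom(U, W)) :
  \dim {: U} = \dim {: W} -> lker f == 0%VS -> bijective f.
Proof.
move=> dimUW ker0; have limgf : limg f = fullv.
  apply/eqP; rewrite eqEdim subvf limg_dim_eq ?(eqP ker0) ?capv0 //=.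
  by rewrite dimUW.
exists f^-1%VF; first exact: lker0_lfunK.
by move=> w; rewrite limg_lfunVK // limgf memvf.
Qed.
End LinearAlgebra.

Section HomLieAlgebra.
Variables (K : fieldType) (g : vectType K) (br : g -> g -> g) (phi : g -> g).
Hypothesis hl : hom_lie br phi.

Let br_linr x : is_lin (br x). Proof. by case: hl => [[]]. Qed.
Let br_linl y : is_lin (br^~ y). Proof. by case: hl => [[]]. Qed.
Let br_skew x y : br x y = - br y x. Proof. by case: hl. Qed.
Let phi_lin : is_lin phi. Proof. by case: hl. Qed.
Let phi_br x y : phi (br x y) = br (phi x) (phi y). Proof. by case: hl. Qed.
Let hom_jacobi x y z :
  br (phi x) (br y z) + br (phi y) (br z x) + br (phi z) (br x y) = 0.
Proof. by case: hl. Qed.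

Lemma hom_jacobi_ad x y w :
  br (br x y) (phi w) = br (phi x) (br y w) - br (phi y) (br x w).
Proof.
rewrite (br_skew x w) (is_linN (br_linr _)) opprK.
have := hom_jacobi w x y; rewrite (br_skew (phi w)) => /eqP.
by rewrite -addrA addrC subr_eq0 => /eqP ->.
Qed.

Lemma ad_is_rep : is_rep br phi phi (ad br).
Proof.
by split=> // [a x y w | x y w]; [apply: br_linl | apply: hom_jacobi_ad].
Qed.

Lemma dual_mapE a y : dual_map phi a y = a (phi y).
Proof. by rewrite linfun_is_linE // => k u v; rewrite phi_lin linearP. Qed.

Lemma ad_circE x a y : ad_circ br phi x a y = - a (br (phi x) y).
Proof.
rewrite linfun_is_linE // => k u v.
by rewrite br_linr linearP /= opprD -scalerN.
Qed.

Lemma ad_circ_is_rep :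
  weakly_involutive br phi -> is_rep br phi (dual_map phi) (ad_circ br phi).
Proof.
move=> wi; split.
- move=> k a b; apply/lfunP => y.
  by rewrite add_lfunE scale_lfunE !dual_mapE add_lfunE scale_lfunE.
- move=> x k a b; apply/lfunP => y.
  rewrite add_lfunE scale_lfunE !ad_circE add_lfunE scale_lfunE /=.
  by rewrite opprD scalerN.
- move=> k x y a; apply/lfunP => z.
  rewrite add_lfunE scale_lfunE !ad_circE phi_lin br_linl linearP /=.
  by rewrite opprD scalerN.
- move=> x a; apply/lfunP => y.
  by rewrite ad_circE !dual_mapE ad_circE phi_br wi.
- move=> x y a; apply/lfunP => z.
  rewrite add_lfunE opp_lfunE !ad_circE dual_mapE !opprK !wi phi_br wi.
  by rewrite hom_jacobi_ad linearB opprB.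
Qed.

Section InvariantForm.
Variable B : g -> g -> K.
Hypotheses (B_bilin : bilin_form_hl B) (B_nondeg : nondegen_hl B).
Hypothesis B_inv : invariant_form_hl br phi B.

Let B_linr x : is_lin (B x : g -> K^o). Proof. by case: B_bilin. Qed.
Let B_linl y : is_lin (B^~ y : g -> K^o). Proof. by case: B_bilin. Qed.
Let B_br x y z : B (br x y) z = B x (br (phi y) z). Proof. by case: B_inv. Qed.
Let B_phi x y : B (phi x) y = B x (phi y). Proof. by case: B_inv. Qed.

Lemma form_injl x x' : (forall y, B x y = B x' y) -> x = x'.
Proof.
move=> eqB; apply/eqP; rewrite -subr_eq0; apply/eqP; case: B_nondeg => nd _.
by apply: nd => y; rewrite (is_linB (B_linl y)) eqB subrr.
Qed.

Lemma form_injr y y' : (forall x, B x y = B x y') -> y = y'.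
Proof.
move=> eqB; apply/eqP; rewrite -subr_eq0; apply/eqP; case: B_nondeg => _ nd.
by apply: nd => x; rewrite (is_linB (B_linr x)) eqB subrr.
Qed.

Definition form_dual x : dual g := linfun (B x : g -> K^o).

Lemma form_dualE x y : form_dual x y = B x y.
Proof. exact: linfun_is_linE. Qed.

Lemma form_dual_lin : is_lin form_dual.
Proof.
move=> k x x'; apply/lfunP => y.
by rewrite !(add_lfunE, scale_lfunE, form_dualE) B_linl.
Qed.

Lemma form_dual_bij : bijective form_dual.
Proof.
have FE := linfun_is_linE form_dual_lin.
have ker0 : lker (linfun form_dual) == 0%VS.
  apply/lker0P => x x'; rewrite !FE => /lfunP eqF.
  by apply: form_injl => y; rewrite -!form_dualE eqF.
by apply: eq_bij FE; apply: lker0_bij ker0; rewrite dim_dual.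
Qed.

Lemma form_dual_rep_equiv :
  rep_equiv phi (ad br) (dual_map phi) (ad_circ br phi).
Proof.
exists form_dual; split; [exact: form_dual_lin | exact: form_dual_bij | |].
- move=> x w; apply/lfunP => y.
  by rewrite ad_circE !form_dualE /ad br_skew (is_linN (B_linl y)) B_br.
- by move=> w; apply/lfunP => y; rewrite dual_mapE !form_dualE B_phi.
Qed.

Hypothesis B_symm : symm_form_hl B.

Lemma br_phi2_phi x y : br (phi (phi x)) (phi y) = br x (phi y).
Proof.
apply: form_injr => z; transitivity (B (br y z) x).
  by symmetry; rewrite B_br B_symm B_br B_phi phi_br.
by rewrite br_skew (is_linN (B_linl x)) B_br -(is_linN (B_linr z)) -br_skew.
Qed.

Lemma invariant_form_weakly_involutive : weakly_involutive br phi.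
Proof.
move=> x y; apply: form_injl => z.
by rewrite !B_br !B_phi !phi_br br_phi2_phi br_skew br_phi2_phi -br_skew.
Qed.

End InvariantForm.

Lemma rep_equiv_invariant_form :
  weakly_involutive br phi ->
  rep_equiv phi (ad br) (dual_map phi) (ad_circ br phi) ->
  exists B : g -> g -> K,
    [/\ bilin_form_hl B, nondegen_hl B & invariant_form_hl br phi B].
Proof.
move=> wi [f [f_lin [f' fK f'K] f_ad f_phi]].
exists (fun x y => f y x); split.
- split=> [x k u v | y k u v]; last exact: linearP.
  by rewrite f_lin add_lfunE scale_lfunE.
- split=> [x fx0 | y fy0].
    by apply: dual_separates => a; rewrite -(f'K a) fx0.
  apply: (can_inj fK); rewrite (is_lin0 f_lin).
  by apply/lfunP => x; rewrite zero_lfunE fy0.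
- split=> [x y z | x y]; last by rewrite -f_phi dual_mapE.
  by rewrite f_ad ad_circE wi br_skew linearN.
Qed.

End HomLieAlgebra.

Theorem proposition2p15 (K : fieldType) (g : vectType K)
    (br : g -> g -> g) (phi : g -> g) :
  hom_lie br phi ->
  ((exists B : g -> g -> K,
      [/\ bilin_form_hl B, symm_form_hl B, nondegen_hl B
        & invariant_form_hl br phi B]) ->
     [/\ weakly_involutive br phi,
         is_rep br phi phi (ad br),
         is_rep br phi (dual_map phi) (ad_circ br phi)
       & rep_equiv phi (ad br) (dual_map phi) (ad_circ br phi)]) /\
  ((weakly_involutive br phi /\
    [/\ is_rep br phi phi (ad br),
        is_rep br phi (dual_map phi) (ad_circ br phi)
      & rep_equiv phi (ad br) (dual_map phi) (ad_circ br phi)]) ->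
     exists B : g -> g -> K,
       [/\ bilin_form_hl B, nondegen_hl B & invariant_form_hl br phi B]).
Proof.
move=> hl; split.
- case=> B [B_bilin B_symm B_nondeg B_inv].
  have wi := invariant_form_weakly_involutive hl B_bilin B_nondeg B_inv B_symm.
  split=> //; first exact: ad_is_rep.
    exact: ad_circ_is_rep.
  exact (form_dual_rep_equiv hl B_bilin B_nondeg B_inv).
- by case=> wi [_ _ equiv]; apply: rep_equiv_invariant_form.
Qed.
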